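(* Let $\beta_{\mathtt{H}},\beta_{\mathtt{L}},\gamma_{\mathtt{H}},\gamma_{\mathtt{L}}>0$ with $\beta_{\mathtt{H}}/\gamma_{\mathtt{H}}>\beta_{\mathtt{L}}/\gamma_{\mathtt{L}}$ and $\beta_{\mathtt{H}}>\beta_{\mathtt{L}}$, $q_{\mathtt{LH}}>0$, $\alpha\in(0,1)$, fix $z_{\mathtt{S}}\in[0,1]$, and set $w(z_{\mathtt{S}}):=\alpha z_{\mathtt{S}}+1-z_{\mathtt{S}}$, $\hat\beta_{\mathtt{Q}}(z_{\mathtt{S}}):=\beta_{\mathtt{Q}}w(z_{\mathtt{S}})$. Consider the uni-directional mutation dynamics \begin{align*} \dot{\mathtt{I}}_{\mathtt{H}}&=\hat\beta_{\mathtt{H}}(z_{\mathtt{S}})\mathtt{I}_{\mathtt{H}}(1-\mathtt{I}_{\mathtt{H}}-\mathtt{I}_{\mathtt{L}})+q_{\mathtt{LH}}\mathtt{I}_{\mathtt{L}}-\gamma_{\mathtt{H}}\mathtt{I}_{\mathtt{H}},\\ \dot{\mathtt{I}}_{\mathtt{L}}&=\hat\beta_{\mathtt{L}}(z_{\mathtt{S}})\mathtt{I}_{\mathtt{L}}(1-\mathtt{I}_{\mathtt{H}}-\mathtt{I}_{\mathtt{L}})-(q_{\mathtt{LH}}+\gamma_{\mathtt{L}})\mathtt{I}_{\mathtt{L}}. \end{align*} Let $\mathcal{D}_2:=\beta_{\mathtt{H}}\gamma_{\mathtt{L}}-\beta_{\mathtt{L}}\gamma_{\mathtt{H}}+\beta_{\mathtt{H}}q_{\mathtt{LH}}-\beta_{\mathtt{L}}q_{\mathtt{LH}}$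 and $\mathcal{N}^{\mathtt{L}}_2:=\gamma_{\mathtt{L}}+q_{\mathtt{LH}}-\hat\beta_{\mathtt{L}}(z_{\mathtt{S}})$. Then the candidate coexistence equilibrium $$\mathbf{E}_3=\Big(\frac{\gamma_{\mathtt{L}}+q_{\mathtt{LH}}}{\hat\beta_{\mathtt{L}}(z_{\mathtt{S}})},\ \frac{q_{\mathtt{LH}}\mathcal{N}^{\mathtt{L}}_2}{w(z_{\mathtt{S}})\mathcal{D}_2},\ \frac{-\mathcal{N}^{\mathtt{L}}_2(\mathcal{D}_2+\beta_{\mathtt{L}}q_{\mathtt{LH}})}{\hat\beta_{\mathtt{L}}(z_{\mathtt{S}})\mathcal{D}_2}\Big)$$ (in coordinates $(\mathtt{S},\mathtt{I}_{\mathtt{H}},\mathtt{I}_{\mathtt{L}})$) does not exist, i.e., its $\mathtt{I}_{\mathtt{H}}$- and $\mathtt{I}_{\mathtt{L}}$-components cannot both be positive.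
   Context: Bi-virus SIS model with mutation only from strain $\mathtt{L}$ to strain $\mathtt{H}$ (rate $q_{\mathtt{LH}}$, with $q_{\mathtt{HL}}=0$); $\mathtt{I}_{\mathtt{H}},\mathtt{I}_{\mathtt{L}}$ infected fractions, $\mathtt{S}=1-\mathtt{I}_{\mathtt{H}}-\mathtt{I}_{\mathtt{L}}$, $\beta$'s transmission rates, $\gamma$'s recovery rates, $z_{\mathtt{S}}$ fraction of susceptibles protected, protection scaling infection rates by $\alpha$. *)

From Stdlib Require Import Reals.
Open Scope R_scope.

Definition wz (alpha zS : R) : R := alpha * zS + 1 - zS.

Definition beta_hat (beta alpha zS : R) : R := beta * wz alpha zS.

Definition dIH (bH bL gH gL qLH alpha zS IH IL : R) : R :=
  beta_hat bH alpha zS * IH * (1 - IH - IL) + qLH * IL - gH * IH.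
Definition dIL (bH bL gH gL qLH alpha zS IH IL : R) : R :=
  beta_hat bL alpha zS * IL * (1 - IH - IL) - (qLH + gL) * IL.

Definition D2 (bH bL gH gL qLH : R) : R :=
  bH * gL - bL * gH + bH * qLH - bL * qLH.

Definition N2L (bL gL qLH alpha zS : R) : R :=
  gL + qLH - beta_hat bL alpha zS.

Definition E3_S (bH bL gH gL qLH alpha zS : R) : R :=
  (gL + qLH) / beta_hat bL alpha zS.
Definition E3_IH (bH bL gH gL qLH alpha zS : R) : R :=
  qLH * N2L bL gL qLH alpha zS / (wz alpha zS * D2 bH bL gH gL qLH).
Definition E3_IL (bH bL gH gL qLH alpha zS : R) : R :=
  - N2L bL gL qLH alpha zS * (D2 bH bL gH gL qLH + bL * qLH)
  / (beta_hat bL alpha zS * D2 bH bL gH gL qLH).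

(** Both components of [E3] are quotients by [w D2], which is positive under
    the hypotheses.  Positivity of the [I_H]-component then forces
    [N2L > 0], while positivity of the [I_L]-component, whose numerator is
    [- N2L (D2 + bL qLH)] with [D2 + bL qLH > 0], forces [N2L < 0]. *)

From Stdlib Require Import Reals Lra Psatz.
Open Scope R_scope.

Lemma Rdiv_pos_num (a b : R) : 0 < b -> 0 < a / b -> 0 < a.
Proof.
  intros Hb Hab.
  replace a with (a / b * b) by (field; lra).
  now apply Rmult_lt_0_compat.
Qed.

Lemma Rdiv_lt_cross (a b c d : R) :
  0 < b -> 0 < d -> a / b < c / d -> a * d < c * b.
Proof.
  intros Hb Hd Hlt.
  replace (a * d) with (a / b * (b * d)) by (field; lra).
  replace (c * b) with (c / d * (b * d)) by (field; lra).
  apply Rmult_lt_compat_r; [nra | exact Hlt].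
Qed.

Lemma wz_pos (alpha zS : R) : 0 < alpha -> 0 <= zS <= 1 -> 0 < wz alpha zS.
Proof. intros Ha Hz; unfold wz; nra. Qed.

Lemma D2_pos (bH bL gH gL qLH : R) :
  bL * gH < bH * gL -> bL < bH -> 0 <= qLH -> 0 < D2 bH bL gH gL qLH.
Proof. intros Hc Hb Hq; unfold D2; nra. Qed.

Section SignOfN2L.

Variables bH bL gH gL qLH alpha zS : R.
Hypothesis wz_gt0 : 0 < wz alpha zS.
Hypothesis D2_gt0 : 0 < D2 bH bL gH gL qLH.

Lemma N2L_pos_of_E3_IH_pos :
  0 < qLH -> 0 < E3_IH bH bL gH gL qLH alpha zS -> 0 < N2L bL gL qLH alpha zS.
Proof.
  intros Hq HIH.
  assert (HqN : 0 < qLH * N2L bL gL qLH alpha zS).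
  { apply (Rdiv_pos_num _ (wz alpha zS * D2 bH bL gH gL qLH)); [nra | exact HIH]. }
  nra.
Qed.

Lemma N2L_neg_of_E3_IL_pos :
  0 < bL -> 0 <= qLH -> 0 < E3_IL bH bL gH gL qLH alpha zS ->
  N2L bL gL qLH alpha zS < 0.
Proof.
  intros HbL Hq HIL.
  unfold E3_IL, beta_hat in HIL.
  assert (HN : 0 < - N2L bL gL qLH alpha zS * (D2 bH bL gH gL qLH + bL * qLH)).
  { apply (Rdiv_pos_num _ (bL * wz alpha zS * D2 bH bL gH gL qLH)); [|exact HIL].
    apply Rmult_lt_0_compat; [nra | exact D2_gt0]. }
  assert (HDq : 0 < D2 bH bL gH gL qLH + bL * qLH) by nra.
  nra.
Qed.

End SignOfN2L.

Theorem proposition2 (bH bL gH gL qLH alpha zS : R) :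
  0 < bH -> 0 < bL -> 0 < gH -> 0 < gL ->
  bH / gH > bL / gL -> bH > bL ->
  0 < qLH -> 0 < alpha < 1 -> 0 <= zS <= 1 ->
  ~ (0 < E3_IH bH bL gH gL qLH alpha zS /\ 0 < E3_IL bH bL gH gL qLH alpha zS).
Proof.
  intros _ HbL HgH HgL Hratio Hb Hq Ha Hz [HIH HIL].
  assert (Hw : 0 < wz alpha zS) by (apply wz_pos; lra).
  assert (HD : 0 < D2 bH bL gH gL qLH).
  { apply D2_pos; [apply Rdiv_lt_cross; assumption | exact Hb | lra]. }
  pose proof (N2L_pos_of_E3_IH_pos _ _ _ _ _ _ _ Hw HD Hq HIH).
  pose proof (N2L_neg_of_E3_IL_pos _ _ _ _ _ _ _ Hw HD HbL (Rlt_le _ _ Hq) HIL).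
  lra.
Qed.
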